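(* Let $X\in\mathcal M_{\mathbf r}$, $U_1,\dots,U_d$ a minimal left-orthogonal TT decomposition of $X$, and $V\in\mathrm T_X\mathcal M_{\mathbf r}$ given by gauged cores $\delta V_1,\dots,\delta V_d$. Let $c_1,\dots,c_d$ be smooth core curves on $(-\epsilon,\epsilon)$ with $c_k(t)=U_k+t\,\delta V_k+O(t^2)$ ($k<d$), $c_d(t)=U_d+t\,\delta V_d$, such that for every $t$ the cores $c_1(t),\dots,c_d(t)$ form a minimal left-orthogonal TT decomposition of a tensor in $\mathcal M_{\mathbf r}$. Let $X_{\le k}(t),X_{\ge k}(t)$ denote the interface matrices built from $c_1(t),\dots,c_d(t)$. Then for all $k\in[d]$: (1) $\frac{d}{dt}X_{\le k}(t)\big|_{t=0}=V_{\le k}$; (2) $\frac{d}{dt}X_{\ge k}(t)\big|_{t=0}=V_{\ge k}$.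
   Context: Fix $d\ge2$, positive integers $n_1,\dots,n_d$, $\mathbf r=(r_1,\dots,r_{d-1})$, $r_0=r_d=1$; $\mathcal M_{\mathbf r}$ is the manifold of tensors of TT-rank $\mathbf r$ (TT-rank defined via ranks of the colexicographic flattenings $Z^{<\mu>}$). TT cores $U_k\in\mathbb R^{r_{k-1}\times n_k\times r_k}$ with slices $U_k(i)$ give $X(i_1,\dots,i_d)=U_1(i_1)\cdots U_d(i_d)$; minimal means the TT-rank equals $\mathbf r$; $U^L:=U^{<2>}\in\mathbb R^{r_{k-1}n_k\times r_k}$, $U^R:=U^{<1>}\in\mathbb R^{r_{k-1}\times n_kr_k}$; left-orthogonal means $(U_k^L)^\top U_k^L=I$ for $k<d$. Interface matrices: $X_{\le0}=1$, $X_{\le k}=(I_{n_k}\otimes X_{\le k-1})U_k^L$; $X_{\ge d+1}=1$, $X_{\ge k}^\top=U_k^R(X_{\ge k+1}^\top\otimes I_{n_k})$. Tangent vectors: $V=\sum_kU_1(i_1)\cdots U_{k-1}(i_{k-1})\delta V_k(i_k)U_{k+1}(i_{k+1})\cdots U_d(i_d)$ with $(\delta V_k^L)^\top U_k^L=0$ for $k<d$. Variational interface matrices: $V_{\le0}=0$, $V_{\le k}=(I_{n_k}\otimes V_{\le k-1})U_k^L+(I_{n_k}\otimes X_{\le k-1})\delta V_k^L$; $V_{\ge d+1}=0$, $V_{\ge k}^\top=U_k^R(V_{\ge k+1}^\top\otimes I_{n_k})+\delta V_k^R(X_{\ge k+1}^\top\otimes I_{n_k})$. *)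

From HB Require Import structures.
From mathcomp Require Import all_boot all_order all_algebra.
From mathcomp Require Import mxtens.
From mathcomp Require Import all_classical all_reals all_analysis.
Set Implicit Arguments. Unset Strict Implicit. Unset Printing Implicit Defensive.
Import Order.TTheory GRing.Theory Num.Theory.
Local Open Scope ring_scope.

(* Conventions:
   - modes k = 1..d; n k = n_k; r k = r_k with r 0 = r d = 1 (hypotheses).
   - a TT core U_k is given by its slices U_k(i) : 'M_(r_{k-1}, r_k), i < n_k.
   - the Kronecker product is mxtens.tensmx (A *t B), with the standard
     index (i1 * p + i2) for A : 'M_(m,_), B : 'M_(p,_).
   - multi-indices (i_1,...,i_k) are encoded colexicographically:
     i_1 + n_1 i_2 + n_1 n_2 i_3 + ... *)

Section TT.
Variable R : realType.
Variables (d : nat) (n r : nat -> nat).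

Definition core (k : nat) := 'I_(n k) -> 'M[R]_(r k.-1, r k).
Definition cores := forall k : nat, core k.

(* left unfolding U^L in R^{r_{k-1} n_k x r_k}: row index alpha + r_{k-1} i *)
Definition coreL k (C : core k) : 'M[R]_(n k * r k.-1, r k) :=
  \matrix_(p, b) C (mxtens_unindex p).1 (mxtens_unindex p).2 b.
(* right unfolding U^R in R^{r_{k-1} x n_k r_k}: column index i + n_k beta *)
Definition coreR k (C : core k) : 'M[R]_(r k.-1, r k * n k) :=
  \matrix_(a, q) C (mxtens_unindex q).2 a (mxtens_unindex q).1.

Fixpoint P (k : nat) : nat := if k is k'.+1 then (n k'.+1 * P k')%N else 1%N.
Fixpoint Q (j k : nat) : nat := if j is j'.+1 then (Q j' k.+1 * n k)%N else 1%N.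

Fixpoint Xle (U : cores) (k : nat) : 'M[R]_(P k, r k) :=
  if k is k'.+1 then (1%:M : 'M[R]_(n k'.+1)) *t Xle U k' *m coreL (U k'.+1)
  else const_mx 1.

(* transposed right interface matrices, built with j = number of cores:
   XgeT U j k = X_{>=k}^T when k + j = d + 1;
   X_{>=d+1}^T = 1, X_{>=k}^T = U_k^R (X_{>=k+1}^T (x) I_{n_k}) *)
Fixpoint XgeT (U : cores) (j k : nat) : 'M[R]_(r k.-1, Q j k) :=
  if j is j'.+1 then coreR (U k) *m (XgeT U j' k.+1 *t (1%:M : 'M[R]_(n k)))
  else const_mx 1.

Definition Xge (U : cores) (k : nat) : 'M[R]_(Q (d.+1 - k) k, r k.-1) :=
  (XgeT U (d.+1 - k) k)^T.

Fixpoint Vle (U dV : cores) (k : nat) : 'M[R]_(P k, r k) :=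
  if k is k'.+1 then
    (1%:M : 'M[R]_(n k'.+1)) *t Vle U dV k' *m coreL (U k'.+1)
  + (1%:M : 'M[R]_(n k'.+1)) *t Xle U k' *m coreL (dV k'.+1)
  else 0.

Fixpoint VgeT (U dV : cores) (j k : nat) : 'M[R]_(r k.-1, Q j k) :=
  if j is j'.+1 then
    coreR (U k) *m (VgeT U dV j' k.+1 *t (1%:M : 'M[R]_(n k)))
  + coreR (dV k) *m (XgeT U j' k.+1 *t (1%:M : 'M[R]_(n k)))
  else 0.

Definition Vge (U dV : cores) (k : nat) : 'M[R]_(Q (d.+1 - k) k, r k.-1) :=
  (VgeT U dV (d.+1 - k) k)^T.

(* Tensors in R^{n_1 x ... x n_d}, stored as their colexicographic
   vectorization (a column of length n_1 ... n_d). *)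
Definition tensor := 'cV[R]_(P d).

Definition flat (Z : tensor) (mu : nat) : 'M[R]_(P mu, Q (d - mu) mu.+1) :=
  \matrix_(p, q) \sum_(s < P d | (s : nat) == (p + P mu * q)%N) Z s 0.

Definition in_Mr (Z : tensor) : Prop :=
  forall mu, (1 <= mu < d)%N -> \rank (flat Z mu) = r mu.

(* the row U_1(i_1) ... U_k(i_k), for the colex-encoded index s of (i_1..i_k) *)
Fixpoint ttrow (U : cores) (k : nat) : 'I_(P k) -> 'M[R]_(1, r k) :=
  match k return 'I_(P k) -> 'M[R]_(1, r k) with
  | k'.+1 => fun s => @ttrow U k' (mxtens_unindex s).2 *m U k'.+1 (mxtens_unindex s).1
  | 0 => fun _ => const_mx 1
  end.

Definition is_TT (Z : tensor) (U : cores) : Prop :=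
  forall (s : 'I_(P d)) (b : 'I_(r d)), @ttrow U d s 0 b = Z s 0.

Definition minimal_TT (Z : tensor) (U : cores) : Prop := is_TT Z U /\ in_Mr Z.

Definition left_orth (U : cores) : Prop :=
  forall k, (1 <= k < d)%N -> (coreL (U k))^T *m coreL (U k) = 1%:M.

Definition gauged (U dV : cores) : Prop :=
  forall k, (1 <= k < d)%N -> (coreL (dV k))^T *m coreL (U k) = 0.

End TT.

Definition smooth_on (R : realType) (V : normedModType R) (e : R) (f : R -> V)
  : Prop :=
  forall (m : nat) (t : R), - e < t < e -> derivable (derive1n m f) t 1.

From HB Require Import structures.
From mathcomp Require Import all_boot all_order all_algebra.
From mathcomp Require Import mxtens.
From mathcomp Require Import all_classical all_reals all_analysis.
From mathcomp Require Import zify.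
Import Order.TTheory GRing.Theory Num.Theory.
Import numFieldNormedType.Exports.
Local Open Scope ring_scope.

(* Each core curve agrees with the line U_k + t dV_k up to O(t^2), so it takes
   the value U_k at 0 with derivative dV_k there.  The interface matrices are
   obtained from the cores by unfoldings, Kronecker products with identities,
   matrix products and transposition; differentiating their defining
   recursions with the product rule gives exactly the recursions that define
   V_{<=k} and V_{>=k}. *)

Section MatrixDerivative.
Context {R : realFieldType} {V : normedModType R} {x v : V}.

Lemma is_derive_mxP {m n} (M : V -> 'M[R]_(m, n)) (D : 'M[R]_(m, n)) :
  is_derive x v M D <-> forall i j, is_derive x v (fun y => M y i j) (D i j).
Proof.
split=> [[dM <-] i j | dMij].
  have dMij := (derivable_mxP M x v).1 dM i j.
  by apply: DeriveDef => //; rewrite derive_mx // mxE.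
have dM : derivable M x v by apply/derivable_mxP => i j; case: (dMij i j).
apply: DeriveDef => //; rewrite derive_mx //.
by apply/matrixP => i j; rewrite mxE derive_val.
Qed.

Lemma is_derive_mulmx {m n p} {A : V -> 'M[R]_(m, n)} {B : V -> 'M[R]_(n, p)} {dA dB} :
  is_derive x v A dA -> is_derive x v B dB ->
  is_derive x v (fun y => A y *m B y) (dA *m B x + A x *m dB).
Proof.
move=> /is_derive_mxP dA_ij /is_derive_mxP dB_ij; apply/is_derive_mxP => i j.
have dAB := is_derive_sum (fun l => is_deriveM (dA_ij i l) (dB_ij l j)).
have -> : (fun y => (A y *m B y) i j) =
    \sum_(l < n) ((fun y => A y i l) * (fun y => B y l j)).
  by apply/funext => y; rewrite fct_sumE mxE.
apply: is_derive_eq dAB _.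
rewrite !mxE -big_split; apply: eq_bigr => l _.
by rewrite addrC; congr (_ + _); apply: mulrC.
Qed.

Lemma is_derive_tensmx {m n p q} {A : V -> 'M[R]_(m, n)} {B : V -> 'M[R]_(p, q)} {dA dB} :
  is_derive x v A dA -> is_derive x v B dB ->
  is_derive x v (fun y => A y *t B y) (dA *t B x + A x *t dB).
Proof.
move=> /is_derive_mxP dA_ij /is_derive_mxP dB_ij; apply/is_derive_mxP => i j.
set i1 := (mxtens_unindex i).1; set i2 := (mxtens_unindex i).2.
set j1 := (mxtens_unindex j).1; set j2 := (mxtens_unindex j).2.
have -> : (fun y => (A y *t B y) i j) = (fun y => A y i1 j1) * (fun y => B y i2 j2).
  by apply/funext => y; rewrite mxE.
apply: is_derive_eq (is_deriveM (dA_ij i1 j1) (dB_ij i2 j2)) _.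
by rewrite !mxE addrC; congr (_ + _); apply: mulrC.
Qed.

Lemma is_derive_trmx {m n} {A : V -> 'M[R]_(m, n)} {dA} :
  is_derive x v A dA -> is_derive x v (fun y => (A y)^T) dA^T.
Proof.
move=> /is_derive_mxP dA_ij; apply/is_derive_mxP => i j.
have -> : (fun y => (A y)^T i j) = (fun y => A y j i) by apply/funext => y; rewrite mxE.
by rewrite mxE.
Qed.

End MatrixDerivative.

Section EqOSqr.
Local Open Scope classical_set_scope.
Variables (R : realFieldType) (W : normedModType R) (f : R -> W) (u w : W).
Hypothesis f_eqO : (fun t => f t - (u + t *: w)) =O_ (0 : R) (fun t : R => t ^+ 2).

Lemma eqO_sqr_at0 : f 0 = u.
Proof.
have [k _ /nbhs_singleton] := (eqO_exP _ _ _).1 f_eqO.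
rewrite /= expr0n /= normr0 mulr0 scale0r addr0 normr_le0 subr_eq0.
by move/eqP.
Qed.

Lemma is_derive_eqO_sqr : is_derive (0 : R) (1 : R) f w.
Proof.
have [k k_gt0 f_le] := (eqO_exP _ _ _).1 f_eqO.
suff quot_cvg : (fun h : R => h^-1 *: ((f \o shift 0) (h *: 1) - f 0)) @ 0^' --> w.
  by apply: DeriveDef; [apply/cvg_ex; exists w | apply: cvg_lim].
apply/cvgrPdist_le => /= eps eps_gt0.
have {}f_le : \forall h \near 0^', `|f h - (u + h *: w)| <= k * `|h ^+ 2|.
  exact: cvg_within f_le.
near=> h.
have h_neq0 : h != 0 by near: h; exact: nbhs_dnbhs_neq.
have h_small : `|h| < eps / k by near: h; apply: dnbhs0_lt; rewrite divr_gt0.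
have -> : w - h^-1 *: (f (h *: 1 + 0) - f 0) = - (h^-1 *: (f h - (u + h *: w))).
  rewrite addr0 eqO_sqr_at0 [h%:A]mulr1 !(scalerDr, scalerN, scalerBr) scalerA.
  by rewrite mulVf // scale1r !opprB addrA (addrC w).
have f_le_h : `|f h - (u + h *: w)| <= k * `|h ^+ 2| by near: h.
rewrite normrN normrZ normrV ?unitfE //.
apply: le_trans (ler_wpM2l _ f_le_h) _; first by rewrite invr_ge0.
rewrite normrX mulrCA expr2 mulKf ?normr_eq0 //.
by rewrite -ler_pdivlMl // mulrC ltW.
Unshelve. all: by end_near.
Qed.
End EqOSqr.

Section CoreDerivative.
Context {R : realType} {n r : nat -> nat} {V : normedModType R} {x v : V}.

Lemma is_derive_coreL {k} {C : V -> core R n r k} {D : core R n r k} :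
  (forall i, is_derive x v (fun y => C y i) (D i)) ->
  is_derive x v (fun y => coreL (C y)) (coreL D).
Proof.
move=> dC; apply/is_derive_mxP => p b.
have /is_derive_mxP dC_ab := dC (mxtens_unindex p).1.
have -> : (fun y => coreL (C y) p b) =
    (fun y => C y (mxtens_unindex p).1 (mxtens_unindex p).2 b).
  by apply/funext => y; rewrite mxE.
by rewrite mxE.
Qed.

Lemma is_derive_coreR {k} {C : V -> core R n r k} {D : core R n r k} :
  (forall i, is_derive x v (fun y => C y i) (D i)) ->
  is_derive x v (fun y => coreR (C y)) (coreR D).
Proof.
move=> dC; apply/is_derive_mxP => a q.
have /is_derive_mxP dC_ab := dC (mxtens_unindex q).2.
have -> : (fun y => coreR (C y) a q) =
    (fun y => C y (mxtens_unindex q).2 a (mxtens_unindex q).1).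
  by apply/funext => y; rewrite mxE.
by rewrite mxE.
Qed.

End CoreDerivative.

Section InterfaceDerivative.
Context {R : realType} {d : nat} {n r : nat -> nat}.
Context {c : R -> cores R n r} {U dV : cores R n r} {t0 : R}.
Hypothesis c_t0 : forall k, (1 <= k <= d)%N -> c t0 k = U k.
Hypothesis c_derive : forall k, (1 <= k <= d)%N -> forall i,
  is_derive t0 (1 : R) (fun t => c t k i) (dV k i).

Lemma Xle_t0 k : (k <= d)%N -> Xle (c t0) k = Xle U k.
Proof.
elim: k => [|k IHk] lt_kd //=.
by rewrite IHk ?(ltnW lt_kd) // c_t0 // lt_kd.
Qed.

Lemma XgeT_t0 j k : (1 <= k)%N -> (k + j <= d.+1)%N -> XgeT (c t0) j k = XgeT U j k.
Proof.
elim: j k => [|j IHj] k k_ge1 le_kj //=.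
by rewrite IHj ?addSnnS // c_t0 //; lia.
Qed.

Lemma is_derive_Xle k : (k <= d)%N ->
  is_derive t0 (1 : R) (fun t => Xle (c t) k) (Vle U dV k).
Proof.
elim: k => [_|k IHk lt_kd] /=; first exact: is_derive_cst.
have kS_in : (1 <= k.+1 <= d)%N by rewrite lt_kd.
have dL := is_derive_coreL (c_derive _ kS_in).
have dI := is_derive_tensmx (is_derive_cst (1%:M : 'M[R]_(n k.+1)) t0 1) (IHk (ltnW lt_kd)).
apply: is_derive_eq (is_derive_mulmx dI dL) _.
by rewrite tens0mx add0r Xle_t0 ?(ltnW lt_kd) // c_t0.
Qed.

Lemma is_derive_XgeT j k : (1 <= k)%N -> (k + j <= d.+1)%N ->
  is_derive t0 (1 : R) (fun t => XgeT (c t) j k) (VgeT U dV j k).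
Proof.
elim: j k => [|j IHj] k k_ge1 le_kj /=; first exact: is_derive_cst.
have k_in : (1 <= k <= d)%N by lia.
have dR := is_derive_coreR (c_derive _ k_in).
have le_Skj : (k.+1 + j <= d.+1)%N by lia.
have dI := is_derive_tensmx (IHj k.+1 isT le_Skj) (is_derive_cst (1%:M : 'M[R]_(n k)) t0 1).
apply: is_derive_eq (is_derive_mulmx dR dI) _.
by rewrite tensmx0 addr0 XgeT_t0 ?addSnnS // c_t0 // addrC.
Qed.

Lemma is_derive_Xge k : (1 <= k <= d)%N ->
  is_derive t0 (1 : R) (fun t => Xge d (c t) k) (Vge d U dV k).
Proof.
by move=> k_in; apply/is_derive_trmx/is_derive_XgeT; lia.
Qed.

End InterfaceDerivative.

Theorem lemma16 (R : realType) (d : nat) (n r : nat -> nat)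
  (hd : (2 <= d)%N)
  (hn : forall k, (1 <= k <= d)%N -> (0 < n k)%N)
  (hr0 : r 0%N = 1%N) (hrd : r d = 1%N)
  (X : tensor R d n) (U dV : cores R n r)
  (hU : minimal_TT X U) (hUo : left_orth d U) (hV : gauged d U dV)
  (e : R) (he : 0 < e) (c : R -> cores R n r)
  (hsm : forall k, (1 <= k <= d)%N -> forall i : 'I_(n k),
           smooth_on e (fun t => c t k i))
  (hc : forall k, (1 <= k < d)%N -> forall i : 'I_(n k),
           (fun t => c t k i - (U k i + t *: dV k i))
             =O_ (0 : R) (fun t : R => t ^+ 2))
  (hcd : forall t, - e < t < e -> forall i : 'I_(n d),
           c t d i = U d i + t *: dV d i)
  (hct : forall t, - e < t < e ->
           exists Z : tensor R d n, minimal_TT Z (c t) /\ left_orth d (c t)) :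
  forall k, (1 <= k <= d)%N ->
    is_derive (0 : R) (1 : R) (fun t => Xle (c t) k) (Vle U dV k) /\
    is_derive (0 : R) (1 : R) (fun t => Xge d (c t) k) (Vge d U dV k).
Proof.
have c_eqO k : (1 <= k <= d)%N -> forall i : 'I_(n k),
    (fun t => c t k i - (U k i + t *: dV k i)) =O_ (0 : R) (fun t : R => t ^+ 2).
  case/andP=> k_ge1; rewrite leq_eqVlt => /predU1P[-> i|lt_kd]; last by apply: hc; lia.
  apply/eqO_exP; exists 1 => //; near=> t.
  have t_in : - e < t < e by rewrite -ltr_norml; near: t; exact: (@nbhs0_lt _ R^o e he).
  by rewrite hcd // subrr normr0 mul1r normr_ge0.
have c_0 k : (1 <= k <= d)%N -> c 0 k = U k.
  by move=> k_in; apply/funext => i; exact: eqO_sqr_at0 (c_eqO k k_in i).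
have c_derive k : (1 <= k <= d)%N -> forall i : 'I_(n k),
    is_derive (0 : R) (1 : R) (fun t => c t k i) (dV k i).
  by move=> k_in i; exact: is_derive_eqO_sqr (c_eqO k k_in i).
move=> k k_in; split.
- by apply: (is_derive_Xle c_0 c_derive); case/andP: k_in.
- exact: (is_derive_Xge c_0 c_derive).
Unshelve. all: by end_near.
Qed.
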